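(* For every $\varepsilon\in(0,1]$ there exists $b_0$ such that for every $b\geq b_0$ there exists $n_0$ such that for every $n\geq n_0$ the following holds. Let $G$ be an $(n,\varepsilon)$-digraph and let $\mathbf{m}$ be a perfect fractional matching of $G$ with $h(\mathbf{m})\geq n\log\frac n2+\varepsilon n$. Then there is a $b$-normal perfect fractional matching $\mathbf{x}$ of $G$ with $h(\mathbf{x})\geq h(\mathbf{m})-\varepsilon n$.
   Context: $\log=\log_2$. Digraphs have no loops and at most one edge from $v$ to $w$ per ordered pair. An $(n,\varepsilon)$-digraph is a digraph $G$ on $n$ vertices with $\min_v\min\{|N^+(v)|,|N^-(v)|\}\geq(\frac12+\varepsilon)n$. A perfect fractional matching of a digraph $G$ is $\mathbf{x}\colon E(G)\to\mathbb{R}_{\geq0}$ with $\sum_{w\in N^+(v)}\mathbf{x}_{vw}=1=\sum_{w\in N^-(v)}\mathbf{x}_{wv}$ for every vertex $v$. It is $b$-normal if $\frac1{b|V(G)|}\leq\mathbf{x}_e\leq\frac b{|V(G)|}$ for all $e\in E(G)$. Its entropy is $h(\mathbf{x})=\sum_{e\in E(G)}\mathbf{x}_e\log\frac1{\mathbf{x}_e}$. *)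

From HB Require Import structures.
From mathcomp Require Import all_boot all_order all_algebra.
From mathcomp Require Import all_classical all_reals.
From mathcomp Require Import exp.
From mathcomp Require Import Rstruct.
Set Implicit Arguments. Unset Strict Implicit. Unset Printing Implicit Defensive.
Import Order.TTheory GRing.Theory Num.Theory.
Local Open Scope ring_scope.

Notation R := Rdefinitions.R.

Definition log2 (x : R) : R := ln x / ln 2.

(* A digraph on vertex set 'I_n: an edge relation; no loops, at most one
   edge per ordered pair (automatic for a relation). *)
Record digraph (n : nat) := Digraph {
  edge : rel 'I_n ;
  edge_irrefl : forall v, ~~ edge v v }.

Definition outN n (G : digraph n) (v : 'I_n) : {set 'I_n} := [set w | edge G v w].
Definition inN n (G : digraph n) (v : 'I_n) : {set 'I_n} := [set w | edge G w v].

Definition is_neps_digraph n (eps : R) (G : digraph n) : Prop :=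
  forall v : 'I_n, (1/2 + eps) * n%:R <= #|outN G v|%:R /\
                   (1/2 + eps) * n%:R <= #|inN G v|%:R.

(* A weighting x : 'I_n -> 'I_n -> R; only values on edges matter. *)
Definition weighting n := 'I_n -> 'I_n -> R.

Definition perfect_fractional_matching n (G : digraph n) (x : weighting n) : Prop :=
  (forall v w, edge G v w -> 0 <= x v w) /\
  (forall v, \sum_(w in outN G v) x v w = 1) /\
  (forall v, \sum_(w in inN G v) x w v = 1).

Definition b_normal n (G : digraph n) (b : R) (x : weighting n) : Prop :=
  forall v w, edge G v w -> 1 / (b * n%:R) <= x v w /\ x v w <= b / n%:R.

Definition entropy n (G : digraph n) (x : weighting n) : R :=
  \sum_(v : 'I_n) \sum_(w in outN G v) x v w * log2 (1 / x v w).

From mathcomp Require Import all_boot all_order all_algebra.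
From mathcomp Require Import all_classical all_reals exp Rstruct.
From mathcomp Require Import sequences ring lra.
Import Order.TTheory GRing.Theory Num.Theory.
Set Implicit Arguments. Unset Strict Implicit. Unset Printing Implicit Defensive.
Local Open Scope ring_scope.

(* Cap [m] at [K / n]: by concavity of [x ln (1/x)] each unit of removed mass
   costs about [ln K] of entropy, so the entropy hypothesis forces the removed
   mass [cap_loss] to be [O(n / ln K)].  Mix in [tau / n] on every edge, which
   gives the lower bound of [b]-normality, and then repair the row and column
   deficits by routing [row_def v * col_def w / deficit] from [v] to [w] along
   the alternating paths [v -> w' <- v' -> w] whose outer edges are light
   (capped mass at most [L / n]), adding on the outer edges and subtracting on
   the middle one.  The min-degree condition gives every pair at least [eps n]
   of path mass, so each entry moves by [O(1 / (eps n))].  The entropy loss is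
   then bounded edge by edge through the tangent-line inequality for
   [x ln (1/x)], and the constants [L], [K], [tau] are chosen so that the total
   is at most [eps n / 2] nats. *)

Section LnInequalities.
Context {R : realType}.
Implicit Types (y N p m K : R).

Lemma ln_le_subr1 y : 0 < y -> ln y <= y - 1.
Proof.
move=> y0; have := @le_ln1Dx R (y - 1).
by rewrite subrKC; apply; lra.
Qed.

Lemma subr1V_le_ln y : 0 < y -> 1 - y^-1 <= ln y.
Proof.
move=> y0; have := @ln_le_subr1 y^-1; rewrite invr_gt0 lnV ?posrE // => /(_ y0).
lra.
Qed.

Lemma mul_lnM_ge N p : 0 < N -> 0 <= p -> - (1 / N) <= p * ln (N * p).
Proof.
rewrite div1r => N0; rewrite le0r => /predU1P[->|p0].
  by rewrite mul0r oppr_le0 invr_ge0 ltW.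
have Np0 : 0 < N * p by rewrite mulr_gt0.
have : N * p * (1 - (N * p)^-1) <= N * p * ln (N * p) by rewrite ler_pM2l ?subr1V_le_ln.
rewrite mulrBr mulr1 mulfV ?gt_eqF // -mulrA => h.
rewrite -(ler_pM2l N0) mulrN mulfV ?gt_eqF //; nra.
Qed.

(* [p ln (N p / 4)] loses at most [p ln 4 <= 3 p] against [p ln (N p)]. *)
Lemma mul_lnM_ge_quarter N p y : 0 < N -> 0 <= p -> 0 < y -> p <= 4 * y ->
  - (3 * p + 1 / N) <= p * ln (N * y).
Proof.
move=> N0; rewrite le0r => /predU1P[->|p0] y0 py.
  by rewrite mul0r mulr0 add0r oppr_le0 divr_ge0 // ltW.
have ln4 : ln (4 : R) <= 3 by have := @ln_le_subr1 4; lra.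
have : ln (N * p) - ln 4 <= ln (N * y).
  rewrite -ln_div ?posrE ?mulr_gt0 // ler_ln ?posrE ?divr_gt0 ?mulr_gt0 //.
  by rewrite ler_pdivrMr // -mulrA ler_pM2l //; lra.
rewrite -(ler_pM2l p0) mulrBr => h.
have := mul_lnM_ge N0 (ltW p0).
have : p * ln 4 <= p * 3 by rewrite ler_pM2l.
lra.
Qed.

Lemma ln2_gt0 : 0 < ln (2 : R).
Proof. by apply: ln_gt0; rewrite ltr1n. Qed.

Lemma ln2_ge_half : 1 / 2 <= ln (2 : R).
Proof. by have := @subr1V_le_ln 2; rewrite -div1r; lra. Qed.

Definition entr y : R := y * ln (1 / y).

(* The tangent-line bound [entr m <= entr y - (m - y) (ln y + 1)] of the concave
   function [entr] at [y], with [ln y] written as [ln (N y) - ln N]. *)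
Lemma entr_sub_le N m y : 0 < N -> 0 <= m -> 0 < y ->
  entr m - entr y <= (y - m) * ln (N * y) + (m - y) * (ln N - 1).
Proof.
move=> N0 m0 y0.
have ey : entr y = - (y * ln y) by rewrite /entr div1r lnV ?posrE //; ring.
rewrite ey lnM ?posrE //.
move: m0; rewrite le0r => /predU1P[->|m1]; first by rewrite /entr mul0r; nra.
have -> : entr m = - (m * ln m) by rewrite /entr div1r lnV ?posrE //; ring.
have : m * ln (y / m) <= m * (y / m - 1) by rewrite ler_pM2l // ln_le_subr1 ?divr_gt0.
have -> : m * (y / m - 1) = y - m by rewrite mulrBr mulr1 mulrCA divff ?gt_eqF // mulr1.
rewrite ln_div ?posrE //.
lra.
Qed.

Lemma entr_le_capped N m K : 0 < N -> 0 <= m -> 1 <= K ->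
  entr m <= m * ln N + 1 / N - (m - Num.min m (K / N)) * ln K.
Proof.
move=> N0 m0 K1.
have lnK0 : 0 <= ln K by apply: ln_ge0.
have q0 : 0 < 1 / N by rewrite divr_gt0.
move: m0; rewrite le0r => /predU1P[->|m1].
  rewrite /entr (min_idPl _) ?divr_ge0 ?(ltW N0) //; last lra.
  by rewrite !mul0r subrr mul0r !subr0 add0r ltW.
have Nm0 : 0 < N * m by rewrite mulr_gt0.
have -> : entr m = m * ln N - m * ln (N * m).
  by rewrite /entr div1r lnV ?posrE // lnM ?posrE //; ring.
have hm := mul_lnM_ge N0 (ltW m1).
have [mK|Km] := lerP m (K / N).
  by rewrite subrr mul0r; lra.
have : m * ln K <= m * ln (N * m).
  rewrite ler_pM2l // ler_ln ?posrE //; try lra.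
  by apply: ltW; rewrite -ltr_pdivrMl // mulrC.
have : 0 <= K / N * ln K by rewrite mulr_ge0 // divr_ge0 //; lra.
lra.
Qed.

End LnInequalities.

Section Thresholds.
Variable eps : R.
Hypothesis eps0 : 0 < eps.

Definition light_cut : R := 4 / eps.
Definition light_bound : R := light_cut + 1 + 2 / eps.
Definition cap : R := 4 * expR (2 * ln light_bound + 8 / eps).
Definition heavy_bound : R := cap + 1 + 2 / eps.
Definition mix_slack : R := 2 * ln light_bound + 4 / eps + 4 + ln heavy_bound.
Definition mix : R := eps / (2 * mix_slack + 4).

Lemma light_cut_gt0 : 0 < light_cut.
Proof. by rewrite divr_gt0. Qed.

Lemma ln_light_bound_ge0 : 0 <= ln light_bound.
Proof.
apply: ln_ge0; have := light_cut_gt0; rewrite /light_bound.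
have : 0 <= 2 / eps by rewrite divr_ge0 // ltW.
lra.
Qed.

Lemma ln_cap_quarter : ln (cap / 4) = 2 * ln light_bound + 8 / eps.
Proof. by rewrite /cap [4 * _]mulrC mulfK ?pnatr_eq0 // expRK. Qed.

Lemma ln_cap_quarter_ge : 8 / eps <= ln (cap / 4).
Proof. rewrite ln_cap_quarter; have := ln_light_bound_ge0; lra. Qed.

Lemma cap_ge4 : 4 <= cap.
Proof.
rewrite /cap -[X in X <= _]mulr1 ler_wpM2l //.
have := expR_ge1Dx (2 * ln light_bound + 8 / eps); have := ln_light_bound_ge0.
have : 0 <= 8 / eps by rewrite divr_ge0 // ltW.
lra.
Qed.

Lemma ln_heavy_bound_ge0 : 0 <= ln heavy_bound.
Proof.
apply: ln_ge0; have := cap_ge4; rewrite /heavy_bound.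
have : 0 <= 2 / eps by rewrite divr_ge0 // ltW.
lra.
Qed.

Lemma mix_slack_ge0 : 0 <= mix_slack.
Proof.
have := ln_light_bound_ge0; have := ln_heavy_bound_ge0.
have : 0 <= 4 / eps by rewrite divr_ge0 // ltW.
rewrite /mix_slack; lra.
Qed.

Lemma mix_gt0 : 0 < mix.
Proof. by rewrite divr_gt0 //; have := mix_slack_ge0; lra. Qed.

Lemma mix_ge0 : 0 <= mix.
Proof. exact/ltW/mix_gt0. Qed.

Lemma mix_le_quarter : mix <= eps / 4.
Proof.
have := mix_slack_ge0; rewrite /mix => hQ.
have D0 : 0 < 2 * mix_slack + 4 by lra.
rewrite ler_pdivrMr //.
have -> : eps / 4 * (2 * mix_slack + 4) = eps + eps * mix_slack / 2 by field.
have : 0 <= eps * mix_slack by rewrite mulr_ge0 // ltW.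
lra.
Qed.

Lemma mix_mul_slack : mix * mix_slack <= eps / 2.
Proof.
have := mix_slack_ge0; rewrite /mix => hQ.
have D0 : 0 < 2 * mix_slack + 4 by lra.
rewrite mulrAC ler_pdivrMr //.
have -> : eps / 2 * (2 * mix_slack + 4) = eps * mix_slack + 2 * eps by field.
by rewrite lerDl mulr_ge0 // ltW.
Qed.

End Thresholds.

Lemma sum2_lincomb n (f1 f2 f3 f4 : 'I_n -> 'I_n -> R) (k1 k2 k3 k4 : R) :
  \sum_a \sum_b (- (f1 a b * k1) + f2 a b * k2 + k3 * f3 a b + f4 a b * k4) =
  - ((\sum_a \sum_b f1 a b) * k1) + (\sum_a \sum_b f2 a b) * k2
  + k3 * (\sum_a \sum_b f3 a b) + (\sum_a \sum_b f4 a b) * k4.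
Proof.
under eq_bigr => a _ do rewrite !big_split /= sumrN -!mulr_suml -mulr_sumr.
by rewrite !big_split /= sumrN -!mulr_suml -mulr_sumr.
Qed.

Section Adjacency.
Variables (n : nat) (G : digraph n).
Local Notation nn := (n%:R : R).

Definition adj (v w : 'I_n) : R := (edge G v w)%:R.

Lemma adj_ge0 v w : 0 <= adj v w.
Proof. exact: ler0n. Qed.

Lemma adj_le1 v w : adj v w <= 1.
Proof. by rewrite /adj; case: edge. Qed.

Lemma sum_outN (f : 'I_n -> R) v : \sum_(w in outN G v) f w = \sum_w adj v w * f w.
Proof.
rewrite big_mkcond; apply: eq_bigr => w _.
by rewrite inE /adj; case: edge; rewrite ?mul1r ?mul0r.
Qed.

Lemma sum_inN (f : 'I_n -> R) w : \sum_(v in inN G w) f v = \sum_v adj v w * f v.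
Proof.
rewrite big_mkcond; apply: eq_bigr => v _.
by rewrite inE /adj; case: edge; rewrite ?mul1r ?mul0r.
Qed.

Lemma sum_le_card (f : 'I_n -> R) : (forall i, f i <= 1) -> \sum_i f i <= nn.
Proof.
move=> f_le1; apply: le_trans (ler_sum _ (fun i _ => f_le1 i)) _.
by rewrite sumr_const card_ord.
Qed.

Lemma sum_adj_le : \sum_v \sum_w adj v w <= nn * nn.
Proof.
apply: le_trans (ler_sum _ (fun v _ => @sum_le_card (adj v) (adj_le1 v))) _.
by rewrite sumr_const card_ord mulr_natl.
Qed.

Lemma entropyE (y : weighting n) :
  entropy G y = (\sum_v \sum_w adj v w * entr (y v w)) / ln 2.
Proof.
rewrite /entropy mulr_suml; apply: eq_bigr => v _.
rewrite sum_outN mulr_suml; apply: eq_bigr => w _.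
by rewrite /log2 /entr !mulrA.
Qed.

End Adjacency.

Section Construction.
Variables (n : nat) (G : digraph n) (m : weighting n) (eps : R).
Local Notation nn := (n%:R : R).
Local Notation adj := (adj G).
Local Notation K := (cap eps).
Local Notation L := (light_cut eps).
Local Notation tau := (mix eps).
Local Notation Lb := (light_bound eps).
Local Notation B := (heavy_bound eps).

Hypotheses (n_gt0 : (0 < n)%N) (eps_gt0 : 0 < eps) (eps_le1 : eps <= 1).
Hypotheses (G_deg : is_neps_digraph eps G) (m_pfm : perfect_fractional_matching G m).
Hypothesis m_entropy : nn * log2 (nn / 2) + eps * nn <= entropy G m.

Lemma nn_gt0 : 0 < nn.
Proof. by rewrite ltr0n. Qed.

Lemma epsn_gt0 : 0 < eps * nn.
Proof. by rewrite mulr_gt0 ?nn_gt0. Qed.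

Lemma outdeg_ge v : (1/2 + eps) * nn <= \sum_w adj v w.
Proof.
have := (G_deg v).1; rewrite -sum1_card natr_sum sum_outN.
by under eq_bigr do rewrite mulr1.
Qed.

Lemma indeg_ge w : (1/2 + eps) * nn <= \sum_v adj v w.
Proof.
have := (G_deg w).2; rewrite -sum1_card natr_sum sum_inN.
by under eq_bigr do rewrite mulr1.
Qed.

Lemma row_m v : \sum_w adj v w * m v w = 1.
Proof. by rewrite -sum_outN m_pfm.2.1. Qed.

Lemma col_m w : \sum_v adj v w * m v w = 1.
Proof. by rewrite -sum_inN m_pfm.2.2. Qed.

Lemma mix_le1 : tau <= 1.
Proof. have := mix_le_quarter eps_gt0; have := eps_le1; lra. Qed.

(** * Capping *)

Definition mcap v w := adj v w * Num.min (m v w) (K / nn).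

Lemma cap_div_ge0 : 0 <= K / nn.
Proof. by rewrite divr_ge0 // (le_trans _ (cap_ge4 eps_gt0)). Qed.

Lemma mcap_ge0 v w : 0 <= mcap v w.
Proof.
rewrite /mcap /adj; case e: edge; rewrite ?mul0r // mul1r.
by rewrite le_min cap_div_ge0 m_pfm.1.
Qed.

Lemma mcap_le_m v w : mcap v w <= adj v w * m v w.
Proof. by rewrite ler_wpM2l ?adj_ge0 // ge_min lexx. Qed.

Lemma mcap_le_cap v w : mcap v w <= K / nn.
Proof.
rewrite /mcap /adj; case: edge; rewrite ?mul0r ?cap_div_ge0 // mul1r.
by rewrite ge_min lexx orbT.
Qed.

Lemma row_mcap_le1 v : \sum_w mcap v w <= 1.
Proof. by rewrite -(row_m v); apply: ler_sum => w _; apply: mcap_le_m. Qed.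

Lemma col_mcap_le1 w : \sum_v mcap v w <= 1.
Proof. by rewrite -(col_m w); apply: ler_sum => v _; apply: mcap_le_m. Qed.

Definition cap_loss := nn - \sum_v \sum_w mcap v w.

Lemma cap_lossE_row : cap_loss = \sum_v (1 - \sum_w mcap v w).
Proof. by rewrite sumrB sumr_const card_ord. Qed.

Lemma cap_lossE_col : cap_loss = \sum_w (1 - \sum_v mcap v w).
Proof. by rewrite sumrB sumr_const card_ord /cap_loss exchange_big. Qed.

Lemma cap_loss_ge0 : 0 <= cap_loss.
Proof. by rewrite cap_lossE_row sumr_ge0 // => v _; rewrite subr_ge0 row_mcap_le1. Qed.

Lemma sum_m_sub_mcap : \sum_v \sum_w (adj v w * m v w - mcap v w) = cap_loss.
Proof.
under eq_bigr do rewrite sumrB row_m.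
by rewrite cap_lossE_row.
Qed.

Lemma sum_entr_m_ge : nn * ln nn - nn * ln 2 <= \sum_v \sum_w adj v w * entr (m v w).
Proof.
have := m_entropy; rewrite entropyE /log2 ln_div ?posrE ?nn_gt0 // mulrA.
rewrite -(ler_pM2r ln2_gt0) mulrDl !divfK ?gt_eqF ?ln2_gt0 //.
have : 0 <= eps * nn * ln 2 by rewrite !mulr_ge0 ?ler0n ?ltW ?ln2_gt0.
rewrite mulrBr; lra.
Qed.

Lemma sum_entr_m_le : \sum_v \sum_w adj v w * entr (m v w) <= nn * ln nn + nn - cap_loss * ln K.
Proof.
have K1 : 1 <= K by apply: le_trans (cap_ge4 eps_gt0); rewrite ler1n.
have step v w : adj v w * entr (m v w) <=
    adj v w * m v w * ln nn + adj v w / nn - (adj v w * m v w - mcap v w) * ln K.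
  rewrite /mcap /adj; case e: edge; last by rewrite !mul0r subrr mul0r subr0 addr0.
  by have := entr_le_capped nn_gt0 (m_pfm.1 v w e) K1; rewrite !mul1r.
apply: le_trans (ler_sum _ (fun v _ => ler_sum _ (fun w _ => step v w))) _.
under eq_bigr do rewrite sumrB big_split /= -mulr_suml row_m mul1r.
rewrite sumrB big_split /= sumr_const card_ord mulr_natl.
have -> : \sum_v \sum_w (adj v w * m v w - mcap v w) * ln K = cap_loss * ln K.
  by rewrite -sum_m_sub_mcap mulr_suml; apply: eq_bigr => v _; rewrite mulr_suml.
have : \sum_v \sum_w adj v w / nn <= nn.
  apply: sum_le_card => v; rewrite -mulr_suml ler_pdivrMr ?nn_gt0 // mul1r.
  exact: sum_le_card (adj_le1 G v).
lra.
Qed.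

Lemma cap_loss_le : cap_loss <= eps * nn / 4.
Proof.
have ln2_le1 : ln (2 : R) <= 1 by have := @ln_le_subr1 R 2; lra.
have lossK : cap_loss * ln K <= 2 * nn.
  have := sum_entr_m_ge; have := sum_entr_m_le.
  have : nn * ln 2 <= nn by rewrite -[leRHS]mulr1 ler_wpM2l.
  lra.
have lnK : 8 / eps <= ln K.
  apply: le_trans (ln_cap_quarter_ge eps_gt0) _.
  have K0 : 0 < K by apply: lt_le_trans (cap_ge4 eps_gt0).
  rewrite ler_ln ?posrE ?divr_gt0 // ler_pdivrMr //; lra.
have : cap_loss * (8 / eps) <= 2 * nn by apply: le_trans lossK; rewrite ler_wpM2l ?cap_loss_ge0.
rewrite mulrA ler_pdivrMr // => h.
rewrite ler_pdivlMr //; lra.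
Qed.

(** * Mixing and deficits *)

Definition zmix v w := (1 - tau) * mcap v w + tau / nn * adj v w.
Definition row_def v := 1 - \sum_w zmix v w.
Definition col_def w := 1 - \sum_v zmix v w.
Definition deficit := \sum_v row_def v.

Lemma mix_div_ge0 : 0 <= tau / nn.
Proof. by rewrite divr_ge0 ?(mix_ge0 eps_gt0). Qed.

Lemma zmix_ge0 v w : 0 <= zmix v w.
Proof.
by apply: addr_ge0; apply: mulr_ge0; rewrite ?mcap_ge0 ?adj_ge0 ?subr_ge0 ?mix_le1 ?mix_div_ge0.
Qed.

Lemma mix_sum_le1 (s1 s2 : R) : 0 <= s1 <= 1 -> s2 <= nn ->
  (1 - tau) * s1 + tau / nn * s2 <= 1.
Proof.
move=> /andP[s10 s11] s2n.
have : (1 - tau) * s1 <= 1 - tau by rewrite ler_piMr ?subr_ge0 ?mix_le1.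
have : tau / nn * s2 <= tau.
  by rewrite mulrAC ler_pdivrMr ?nn_gt0 // ler_wpM2l ?(mix_ge0 eps_gt0).
lra.
Qed.

Lemma row_def_ge0 v : 0 <= row_def v.
Proof.
rewrite subr_ge0 big_split /= -!mulr_sumr mix_sum_le1 ?row_mcap_le1 //.
  by rewrite sumr_ge0 // => w _; apply: mcap_ge0.
exact: sum_le_card (adj_le1 G v).
Qed.

Lemma col_def_ge0 w : 0 <= col_def w.
Proof.
rewrite subr_ge0 big_split /= -!mulr_sumr mix_sum_le1 ?col_mcap_le1 //.
  by rewrite sumr_ge0 // => v _; apply: mcap_ge0.
exact: sum_le_card (adj_le1 G ^~ w).
Qed.

Lemma row_def_le1 v : row_def v <= 1.
Proof. by rewrite lerBlDr lerDl sumr_ge0 // => w _; apply: zmix_ge0. Qed.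

Lemma col_def_le1 w : col_def w <= 1.
Proof. by rewrite lerBlDr lerDl sumr_ge0 // => v _; apply: zmix_ge0. Qed.

Lemma sum_col_def : \sum_w col_def w = deficit.
Proof. by rewrite /deficit !sumrB exchange_big. Qed.

Lemma deficit_ge0 : 0 <= deficit.
Proof. by rewrite sumr_ge0 // => v _; apply: row_def_ge0. Qed.

(* Scaling [mcap] by [1 - tau] lowers each row sum by at most [tau]. *)
Lemma deficit_le : deficit <= cap_loss + tau * nn.
Proof.
have -> : tau * nn = \sum_(v : 'I_n) tau by rewrite sumr_const card_ord mulr_natr.
rewrite cap_lossE_row -big_split /=.
apply: ler_sum => v _; rewrite /row_def big_split /= -!mulr_sumr.
have := row_mcap_le1 v; have : 0 <= tau / nn * \sum_w adj v w.
  by rewrite mulr_ge0 ?mix_div_ge0 // sumr_ge0 // => w _; apply: adj_ge0.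
have : tau * \sum_w mcap v w <= tau by rewrite ler_piMr ?(mix_ge0 eps_gt0) ?row_mcap_le1.
rewrite mulrBl mul1r; lra.
Qed.

Lemma deficit_ratio_le : deficit / (eps * nn) <= 1 / 2.
Proof.
rewrite ler_pdivrMr ?epsn_gt0 //.
have := deficit_le; have := cap_loss_le.
have : tau * nn <= eps / 4 * nn by rewrite ler_wpM2r ?mix_le_quarter.
rewrite mulrAC; lra.
Qed.

Lemma row_def_le_deficit a : row_def a <= deficit.
Proof. by rewrite /deficit (bigD1 a) //= lerDl sumr_ge0 // => v _; apply: row_def_ge0. Qed.

Lemma col_def_le_deficit b : col_def b <= deficit.
Proof.
by rewrite -sum_col_def (bigD1 b) //= lerDl sumr_ge0 // => w _; apply: col_def_ge0.
Qed.

Definition demand v w := row_def v * col_def w / deficit.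

Lemma demand_ge0 v w : 0 <= demand v w.
Proof. by rewrite divr_ge0 ?deficit_ge0 // mulr_ge0 ?row_def_ge0 ?col_def_ge0. Qed.

(* When [deficit = 0] every [row_def] and [col_def] vanishes, so the junk value
   [x / 0 = 0] is harmless. *)
Lemma sum_demand_row a : \sum_w demand a w = row_def a.
Proof.
rewrite -mulr_suml -mulr_sumr sum_col_def.
have [d0|d0] := eqVneq deficit 0; last by rewrite mulfK.
have : row_def a = 0 by apply/le_anti; rewrite row_def_ge0 -d0 row_def_le_deficit.
by move=> ->; rewrite !mul0r.
Qed.

Lemma sum_demand_col b : \sum_v demand v b = col_def b.
Proof.
rewrite -!mulr_suml -/deficit mulrAC.
have [d0|d0] := eqVneq deficit 0; last by rewrite divff ?mul1r.
have : col_def b = 0 by apply/le_anti; rewrite col_def_ge0 -d0 col_def_le_deficit.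
by move=> ->; rewrite mulr0.
Qed.

(** * Rerouting along light paths *)

Definition light v w := adj v w * ((mcap v w <= L / nn)%R)%:R.

Lemma light01 v w : 0 <= light v w <= 1.
Proof.
rewrite /light /adj; case: (edge G v w); case: (mcap v w <= L / nn)%R;
  by rewrite ?mul1r ?mul0r ?lexx ?ler01.
Qed.

Lemma light_ge0 v w : 0 <= light v w.
Proof. by case/andP: (light01 v w). Qed.

Lemma light_le1 v w : light v w <= 1.
Proof. by case/andP: (light01 v w). Qed.

Lemma nn_div_cut : nn / L = eps * nn / 4.
Proof. by rewrite /light_cut invf_div mulrCA mulrA. Qed.

Lemma nn_div_cut_ge0 : 0 <= nn / L.
Proof. by rewrite nn_div_cut divr_ge0 ?mulr_ge0 ?ler0n ?(ltW eps_gt0). Qed.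

(* On a heavy edge [nn / L * mcap v w > 1]. *)
Lemma adj_sub_le_light v w : adj v w - nn / L * mcap v w <= light v w.
Proof.
rewrite /light; case: (lerP (mcap v w) (L / nn)) => [_|heavy].
  by rewrite /= mulr1n mulr1 lerBlDr lerDl mulr_ge0 ?mcap_ge0 ?nn_div_cut_ge0.
have : 1 <= nn / L * mcap v w.
  have L0 := light_cut_gt0 eps_gt0.
  by rewrite -ler_pdivrMl ?divr_gt0 ?nn_gt0 // invf_div mulr1 ltW.
have := adj_le1 G v w; rewrite /= mulr0n mulr0; lra.
Qed.

Lemma row_light_ge v : \sum_w adj v w - nn / L <= \sum_w light v w.
Proof.
have : nn / L * \sum_w mcap v w <= nn / L.
  by rewrite ler_piMr ?row_mcap_le1 ?nn_div_cut_ge0.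
have : \sum_w adj v w - nn / L * \sum_w mcap v w <= \sum_w light v w.
  by rewrite mulr_sumr -sumrB; apply: ler_sum => w _; apply: adj_sub_le_light.
lra.
Qed.

Lemma col_light_ge w : \sum_v adj v w - nn / L <= \sum_v light v w.
Proof.
have : nn / L * \sum_v mcap v w <= nn / L.
  by rewrite ler_piMr ?col_mcap_le1 ?nn_div_cut_ge0.
have : \sum_v adj v w - nn / L * \sum_v mcap v w <= \sum_v light v w.
  by rewrite mulr_sumr -sumrB; apply: ler_sum => v _; apply: adj_sub_le_light.
lra.
Qed.

(* The alternating path [v -> w' <- v' -> w] whose outer edges are light,
   weighted by the capped mass of its middle edge. *)
Definition path3 v w' v' w := light v w' * light v' w * mcap v' w'.

Definition path_mass v w := \sum_w' \sum_v' path3 v w' v' w.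

Lemma path3_ge0 v w' v' w : 0 <= path3 v w' v' w.
Proof. by rewrite /path3 mulr_ge0 ?mcap_ge0 // mulr_ge0 ?light_ge0. Qed.

Lemma path3_le_mcap v w' v' w : path3 v w' v' w <= mcap v' w'.
Proof. by rewrite /path3 ler_piMl ?mcap_ge0 // mulr_ile1 ?light_ge0 ?light_le1. Qed.

Lemma light_mul_col_mcap_ge v : \sum_w' light v w' - cap_loss <= \sum_w' light v w' * \sum_v' mcap v' w'.
Proof.
rewrite cap_lossE_col -sumrB; apply: ler_sum => w' _.
have := light01 v w'; have := col_mcap_le1 w'; move=> h1 /andP[h2 h3]; nra.
Qed.

Lemma light_mul_row_mcap_ge w : \sum_v' light v' w - cap_loss <= \sum_v' light v' w * \sum_w' mcap v' w'.
Proof.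
rewrite cap_lossE_row -sumrB; apply: ler_sum => v' _.
have := light01 v' w; have := row_mcap_le1 v'; move=> h1 /andP[h2 h3]; nra.
Qed.

(* From [(1 - a) (1 - b) >= 0] for the two light indicators. *)
Lemma path_mass_ge_light_mass v w :
  \sum_w' light v w' * \sum_v' mcap v' w' + \sum_v' light v' w * \sum_w' mcap v' w'
  - (nn - cap_loss) <= path_mass v w.
Proof.
have -> : nn - cap_loss = \sum_w' \sum_v' mcap v' w' by rewrite /cap_loss exchange_big; ring.
have -> : \sum_v' light v' w * \sum_w' mcap v' w' = \sum_w' \sum_v' light v' w * mcap v' w'.
  by rewrite [RHS]exchange_big; apply: eq_bigr => v' _; rewrite mulr_sumr.
under eq_bigr do rewrite mulr_sumr.
rewrite -big_split -sumrB /=; apply: ler_sum => w' _.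
rewrite -big_split -sumrB /=; apply: ler_sum => v' _; rewrite /path3.
have := light01 v w'; have := light01 v' w; have := mcap_ge0 v' w'.
move=> h1 /andP[h2 h3] /andP[h4 h5].
have : 0 <= (1 - light v w') * (1 - light v' w) * mcap v' w'.
  by rewrite mulr_ge0 // mulr_ge0 // subr_ge0.
lra.
Qed.

(* Both endpoints have [(1/2 + eps) nn] neighbours, all but [nn / L] of them
   along light edges, and [cap_loss <= eps nn / 4]. *)
Lemma path_mass_ge v w : eps * nn <= path_mass v w.
Proof.
apply: le_trans (path_mass_ge_light_mass v w).
have := light_mul_col_mcap_ge v; have := light_mul_row_mcap_ge w.
have := row_light_ge v; have := col_light_ge w.
have := outdeg_ge v; have := indeg_ge w; have := cap_loss_le.
rewrite nn_div_cut; have := epsn_gt0; lra.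
Qed.

Lemma path_mass_gt0 v w : 0 < path_mass v w.
Proof. exact: lt_le_trans epsn_gt0 (path_mass_ge v w). Qed.

(* The demand from [v] to [w] is spread over the light paths in proportion to
   their mass: each path carries [flow v w] per unit of [path3]. *)
Definition flow v w := demand v w / path_mass v w.

Definition gain_first a b := \sum_w \sum_v' path3 a b v' w * flow a w.
Definition loss_mid a b := \sum_v \sum_w path3 v b a w * flow v w.
Definition gain_last a b := \sum_v \sum_w' path3 v w' a b * flow v b.

Definition xnorm a b := zmix a b + gain_first a b - loss_mid a b + gain_last a b.

Lemma flow_ge0 v w : 0 <= flow v w.
Proof. by rewrite divr_ge0 ?demand_ge0 ?ltW ?path_mass_gt0. Qed.

Lemma flow_le v w : flow v w <= demand v w / (eps * nn).
Proof. by rewrite ler_wpM2l ?demand_ge0 // lef_pV2 ?posrE ?path_mass_gt0 ?epsn_gt0 ?path_mass_ge. Qed.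

Lemma path_mass_flow v w : path_mass v w * flow v w = demand v w.
Proof. by rewrite mulrC divfK // gt_eqF ?path_mass_gt0. Qed.

Lemma row_gain_first a : \sum_b gain_first a b = row_def a.
Proof.
rewrite /gain_first exchange_big /= -(sum_demand_row a); apply: eq_bigr => w _.
by rewrite -path_mass_flow mulr_suml; apply: eq_bigr => b _; rewrite mulr_suml.
Qed.

Lemma row_loss_mid a : \sum_b loss_mid a b = \sum_b gain_last a b.
Proof.
rewrite /loss_mid /gain_last exchange_big [RHS]exchange_big /=.
by apply: eq_bigr => v _; rewrite [RHS]exchange_big.
Qed.

Lemma col_gain_last b : \sum_a gain_last a b = col_def b.
Proof.
rewrite /gain_last exchange_big /= -(sum_demand_col b); apply: eq_bigr => v _.
rewrite exchange_big /= -path_mass_flow mulr_suml; apply: eq_bigr => w' _.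
by rewrite mulr_suml.
Qed.

Lemma col_gain_first b : \sum_a gain_first a b = \sum_a loss_mid a b.
Proof.
rewrite /gain_first /loss_mid [RHS]exchange_big /=.
by apply: eq_bigr => a _; rewrite exchange_big.
Qed.

Lemma row_xnorm a : \sum_b xnorm a b = 1.
Proof.
rewrite /xnorm big_split sumrB big_split /= row_gain_first row_loss_mid /row_def.
lra.
Qed.

Lemma col_xnorm b : \sum_a xnorm a b = 1.
Proof.
rewrite /xnorm big_split sumrB big_split /= col_gain_first col_gain_last /col_def.
lra.
Qed.

Lemma gain_first_ge0 a b : 0 <= gain_first a b.
Proof. by do 2!(apply: sumr_ge0 => ? _); rewrite mulr_ge0 ?path3_ge0 ?flow_ge0. Qed.

Lemma loss_mid_ge0 a b : 0 <= loss_mid a b.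
Proof. by do 2!(apply: sumr_ge0 => ? _); rewrite mulr_ge0 ?path3_ge0 ?flow_ge0. Qed.

Lemma gain_last_ge0 a b : 0 <= gain_last a b.
Proof. by do 2!(apply: sumr_ge0 => ? _); rewrite mulr_ge0 ?path3_ge0 ?flow_ge0. Qed.

Lemma demand_div_ge0 v w : 0 <= demand v w / (eps * nn).
Proof. by rewrite divr_ge0 ?demand_ge0 ?ltW ?epsn_gt0. Qed.

Lemma gain_first_le a b : gain_first a b <= row_def a / (eps * nn).
Proof.
rewrite -(sum_demand_row a) mulr_suml; apply: ler_sum => w _.
apply: (@le_trans _ _ (\sum_v' mcap v' b * (demand a w / (eps * nn)))).
  by apply: ler_sum => v' _; rewrite ler_pM ?path3_ge0 ?flow_ge0 ?path3_le_mcap ?flow_le.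
by rewrite -mulr_suml ler_piMl ?demand_div_ge0 ?col_mcap_le1.
Qed.

Lemma gain_last_le a b : gain_last a b <= col_def b / (eps * nn).
Proof.
rewrite -(sum_demand_col b) mulr_suml; apply: ler_sum => v _.
apply: (@le_trans _ _ (\sum_w' mcap a w' * (demand v b / (eps * nn)))).
  by apply: ler_sum => w' _; rewrite ler_pM ?path3_ge0 ?flow_ge0 ?path3_le_mcap ?flow_le.
by rewrite -mulr_suml ler_piMl ?demand_div_ge0 ?row_mcap_le1.
Qed.

Lemma loss_mid_le a b : loss_mid a b <= mcap a b * (deficit / (eps * nn)).
Proof.
have -> : deficit / (eps * nn) = \sum_v \sum_w demand v w / (eps * nn).
  by rewrite mulr_suml; apply: eq_bigr => v _; rewrite -mulr_suml sum_demand_row.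
rewrite mulr_sumr; apply: ler_sum => v _; rewrite mulr_sumr; apply: ler_sum => w _.
by rewrite ler_pM ?path3_ge0 ?flow_ge0 ?path3_le_mcap ?flow_le.
Qed.

Lemma gains_off_light a b : light a b = 0 -> gain_first a b = 0 /\ gain_last a b = 0.
Proof.
move=> l0; split; do 2!(apply: big1 => ? _); by rewrite /path3 l0 ?mul0r ?mulr0 ?mul0r.
Qed.

Lemma xnorm_off a b : ~~ edge G a b -> xnorm a b = 0.
Proof.
move=> nab; have a0 : adj a b = 0 by rewrite /adj (negbTE nab).
have mc0 : mcap a b = 0 by rewrite /mcap a0 mul0r.
have [g1 g3] : gain_first a b = 0 /\ gain_last a b = 0.
  by apply: gains_off_light; rewrite /light a0 mul0r.
have l2 : loss_mid a b = 0.
  by do 2!(apply: big1 => ? _); rewrite /path3 mc0 mulr0 mul0r.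
by rewrite /xnorm /zmix a0 mc0 g1 g3 l2 !mulr0 !addr0 subr0.
Qed.

Lemma xnorm_ge a b : edge G a b -> mcap a b / 4 + tau / nn <= xnorm a b.
Proof.
move=> ab; have a1 : adj a b = 1 by rewrite /adj ab.
have := loss_mid_le a b; have := gain_first_ge0 a b; have := gain_last_ge0 a b.
have : mcap a b * (deficit / (eps * nn)) <= mcap a b / 2.
  by rewrite ler_wpM2l ?mcap_ge0 // (le_trans deficit_ratio_le) // div1r.
have : tau * mcap a b <= mcap a b / 4.
  rewrite mulrC ler_wpM2l ?mcap_ge0 //.
  by have := mix_le_quarter eps_gt0; have := eps_le1; rewrite -div1r; lra.
have := mcap_ge0 a b.
rewrite /xnorm /zmix a1 mulr1 mulrBl mul1r; lra.
Qed.

Lemma xnorm_ge_mix a b : edge G a b -> tau / nn <= xnorm a b.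
Proof.
move=> ab; apply: le_trans (xnorm_ge ab).
by rewrite lerDr divr_ge0 ?mcap_ge0.
Qed.

Lemma xnorm_gt0 a b : edge G a b -> 0 < xnorm a b.
Proof.
move=> ab; apply: lt_le_trans (xnorm_ge_mix ab).
by rewrite divr_gt0 ?mix_gt0 ?nn_gt0.
Qed.

Lemma n_xnorm_le a b : edge G a b -> nn * xnorm a b <= nn * mcap a b + tau + 2 / eps.
Proof.
move=> ab; have a1 : adj a b = 1 by rewrite /adj ab.
have : gain_first a b <= 1 / (eps * nn).
  by apply: le_trans (gain_first_le a b) _; rewrite ler_wpM2r ?row_def_le1 ?invr_ge0 ?ltW ?epsn_gt0.
have : gain_last a b <= 1 / (eps * nn).
  by apply: le_trans (gain_last_le a b) _; rewrite ler_wpM2r ?col_def_le1 ?invr_ge0 ?ltW ?epsn_gt0.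
have := loss_mid_ge0 a b; have : 0 <= tau * mcap a b by rewrite mulr_ge0 ?(mix_ge0 eps_gt0) ?mcap_ge0.
have -> : nn * mcap a b + tau + 2 / eps = nn * (mcap a b + tau / nn + 2 * (1 / (eps * nn))).
  by field; rewrite ?gt_eqF ?nn_gt0.
move=> *; rewrite ler_pM2l ?nn_gt0 // /xnorm /zmix a1 mulr1 mulrBl mul1r; lra.
Qed.

Lemma n_xnorm_le_heavy a b : edge G a b -> nn * xnorm a b <= B.
Proof.
move=> ab; apply: le_trans (n_xnorm_le ab) _.
have : nn * mcap a b <= K.
  by rewrite -ler_pdivlMl ?nn_gt0 // mulrC mcap_le_cap.
have := mix_le1; rewrite /heavy_bound; lra.
Qed.

Lemma n_xnorm_le_light a b : edge G a b -> gain_first a b != 0 \/ gain_last a b != 0 ->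
  nn * xnorm a b <= Lb.
Proof.
move=> ab gains; apply: le_trans (n_xnorm_le ab) _.
have : nn * mcap a b <= L.
  rewrite -ler_pdivlMl ?nn_gt0 // mulrC leNgt; apply/negP => heavy.
  have [g1 g3] : gain_first a b = 0 /\ gain_last a b = 0.
    by apply: gains_off_light; rewrite /light leNgt heavy mulr0.
  by case: gains; rewrite ?g1 ?g3 eqxx.
have := mix_le1; rewrite /light_bound; lra.
Qed.

(** * Entropy loss *)

Local Notation dratio := (deficit / (eps * nn)).

Lemma cap_term_le a b : edge G a b ->
  - ((m a b - mcap a b) * ln (nn * xnorm a b)) <= - ((m a b - mcap a b) * ln (K / 4)).
Proof.
move=> ab; have := xnorm_ge ab; rewrite /mcap /adj ab !mul1r.
case: (lerP (m a b) (K / nn)) => [_|heavy] xge; first by rewrite subrr !mul0r.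
have K0 : 0 < K by apply: lt_le_trans (cap_ge4 eps_gt0).
rewrite lerN2 ler_wpM2l ?subr_ge0 ?(ltW heavy) //.
rewrite ler_ln ?posrE ?divr_gt0 //; last by rewrite mulr_gt0 ?nn_gt0 ?xnorm_gt0.
have -> : K / 4 = nn * (K / nn / 4) by field; rewrite gt_eqF ?nn_gt0.
by rewrite ler_pM2l ?nn_gt0 //; move: xge; have := mix_div_ge0; lra.
Qed.

Lemma loss_term_le a b : edge G a b ->
  - (loss_mid a b * ln (nn * xnorm a b)) <= dratio * (3 * mcap a b + 1 / nn).
Proof.
move=> ab; have dr0 : 0 <= dratio by rewrite divr_ge0 ?deficit_ge0 ?ltW ?epsn_gt0.
have := loss_mid_ge0 a b; have := mcap_ge0 a b.
case: (lerP 0 (ln (nn * xnorm a b))) => [l0|l0] g0 mc0.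
  have : 0 <= loss_mid a b * ln (nn * xnorm a b) by rewrite mulr_ge0.
  have : 0 <= dratio * (3 * mcap a b + 1 / nn).
    by rewrite mulr_ge0 // addr_ge0 ?divr_ge0 ?ler0n // mulr_ge0.
  lra.
have : - (mcap a b * ln (nn * xnorm a b)) <= 3 * mcap a b + 1 / nn.
  rewrite lerNl; apply: mul_lnM_ge_quarter; rewrite ?nn_gt0 ?xnorm_gt0 //.
  by have := xnorm_ge ab; have := mix_div_ge0; lra.
move=> /(ler_wpM2l dr0) H1.
have : loss_mid a b * - ln (nn * xnorm a b) <= mcap a b * dratio * - ln (nn * xnorm a b).
  by apply: ler_wpM2r; [rewrite oppr_ge0 ltW | exact: loss_mid_le].
lra.
Qed.

Lemma mix_term_le a b : edge G a b ->
  tau * - (mcap a b * ln (nn * xnorm a b)) <= tau * (3 * mcap a b + 1 / nn).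
Proof.
move=> ab; rewrite ler_wpM2l ?(mix_ge0 eps_gt0) // lerNl.
apply: mul_lnM_ge_quarter; rewrite ?nn_gt0 ?mcap_ge0 ?xnorm_gt0 //.
by have := xnorm_ge ab; have := mix_div_ge0; lra.
Qed.

Lemma unif_term_le a b : edge G a b ->
  tau / nn * ln (nn * xnorm a b) <= tau / nn * ln B.
Proof.
move=> ab; have x0 : 0 < nn * xnorm a b by rewrite mulr_gt0 ?nn_gt0 ?xnorm_gt0.
rewrite ler_wpM2l ?mix_div_ge0 // ler_ln ?posrE ?n_xnorm_le_heavy //.
exact: lt_le_trans x0 (n_xnorm_le_heavy ab).
Qed.

Lemma gain_term_le a b : edge G a b ->
  (gain_first a b + gain_last a b) * ln (nn * xnorm a b)
  <= (gain_first a b + gain_last a b) * ln Lb.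
Proof.
move=> ab; have x0 : 0 < nn * xnorm a b by rewrite mulr_gt0 ?nn_gt0 ?xnorm_gt0.
have [g13|] := boolP ((gain_first a b != 0) || (gain_last a b != 0)); last first.
  by rewrite negb_or !negbK => /andP[/eqP-> /eqP->]; rewrite addr0 !mul0r.
have xL : nn * xnorm a b <= Lb by apply: n_xnorm_le_light; case/orP: g13; tauto.
rewrite ler_wpM2l ?addr_ge0 ?gain_first_ge0 ?gain_last_ge0 // ler_ln ?posrE //.
exact: lt_le_trans x0 xL.
Qed.

Definition edge_err a b :=
  - ((adj a b * m a b - mcap a b) * ln (K / 4)) + (gain_first a b + gain_last a b) * ln Lb
  + (tau + dratio) * (3 * mcap a b + adj a b / nn) + adj a b * (tau / nn * ln B).

Lemma entr_sub_le_edge_err a b :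
  adj a b * (entr (m a b) - entr (xnorm a b))
  <= adj a b * ((m a b - xnorm a b) * (ln nn - 1)) + edge_err a b.
Proof.
rewrite /edge_err; case ab: (edge G a b); last first.
  have a0 : adj a b = 0 by rewrite /adj ab.
  have mc0 : mcap a b = 0 by rewrite /mcap a0 mul0r.
  have [-> ->] : gain_first a b = 0 /\ gain_last a b = 0.
    by apply: gains_off_light; rewrite /light a0 mul0r.
  by rewrite a0 mc0 !(mul0r, mulr0, subrr, addr0, oppr0).
have a1 : adj a b = 1 by rewrite /adj ab.
rewrite a1 !mul1r.
have := entr_sub_le nn_gt0 (m_pfm.1 _ _ ab) (xnorm_gt0 ab).
set l := ln (nn * xnorm a b).
have -> : (xnorm a b - m a b) * l = - ((m a b - mcap a b) * l) + tau * - (mcap a b * l)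
    + tau / nn * l + (gain_first a b + gain_last a b) * l - loss_mid a b * l.
  by rewrite /xnorm /zmix a1 mulr1; ring.
have := cap_term_le ab; have := loss_term_le ab; have := mix_term_le ab.
have := gain_term_le ab; have := unif_term_le ab.
rewrite -/l; lra.
Qed.

Lemma adj_xnorm a b : adj a b * xnorm a b = xnorm a b.
Proof.
rewrite /adj; case ab: (edge G a b); first by rewrite mul1r.
by rewrite mul0r xnorm_off ?ab.
Qed.

Lemma sum_tangent_terms : \sum_a \sum_b adj a b * ((m a b - xnorm a b) * (ln nn - 1)) = 0.
Proof.
apply: big1 => a _.
under eq_bigr do rewrite mulrA.
rewrite -mulr_suml; under eq_bigr do rewrite mulrBr adj_xnorm.
by rewrite sumrB row_m row_xnorm subrr mul0r.
Qed.

Lemma sum_gains : \sum_a \sum_b (gain_first a b + gain_last a b) = 2 * deficit.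
Proof.
under eq_bigr do rewrite big_split /= row_gain_first.
rewrite big_split /= exchange_big /=.
under [X in _ + X]eq_bigr do rewrite col_gain_last.
by rewrite sum_col_def -mulr2n mulr_natl.
Qed.

Lemma sum_err_weights : \sum_a \sum_b (3 * mcap a b + adj a b / nn) <= 4 * nn.
Proof.
under eq_bigr do rewrite big_split /= -mulr_sumr -mulr_suml.
rewrite big_split /= -mulr_sumr -mulr_suml.
have : \sum_a \sum_b mcap a b <= nn := sum_le_card row_mcap_le1.
have : (\sum_a \sum_b adj a b) / nn <= nn by rewrite ler_pdivrMr ?nn_gt0 ?sum_adj_le.
lra.
Qed.

Lemma sum_edge_err_le : \sum_a \sum_b edge_err a b <=
  - (cap_loss * ln (K / 4)) + 2 * deficit * ln Lb + (tau + dratio) * (4 * nn) + tau * nn * ln B.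
Proof.
rewrite (sum2_lincomb (fun a b => adj a b * m a b - mcap a b)
  (fun a b => gain_first a b + gain_last a b) (fun a b => 3 * mcap a b + adj a b / nn) adj).
rewrite sum_m_sub_mcap sum_gains.
have dr0 : 0 <= tau + dratio.
  by rewrite addr_ge0 ?(mix_ge0 eps_gt0) // divr_ge0 ?deficit_ge0 ?ltW ?epsn_gt0.
have := ler_wpM2l dr0 sum_err_weights.
have : (\sum_a \sum_b adj a b) * (tau / nn * ln B) <= tau * nn * ln B.
  have -> : tau * nn * ln B = nn * nn * (tau / nn * ln B).
    by field; rewrite gt_eqF ?nn_gt0.
  by rewrite ler_wpM2r ?sum_adj_le // mulr_ge0 ?mix_div_ge0 ?ln_heavy_bound_ge0.
lra.
Qed.

(* The budget is balanced by the choice of [cap] and [mix]: the gain terms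
   [2 deficit ln Lb + 4 deficit / eps] are paid for by the capping term, up to
   [deficit - cap_loss <= mix nn]. *)
Lemma err_budget : - (cap_loss * ln (K / 4)) + 2 * deficit * ln Lb
  + (tau + dratio) * (4 * nn) + tau * nn * ln B <= eps * nn / 2.
Proof.
rewrite ln_cap_quarter //.
have -> : (tau + dratio) * (4 * nn) = 4 * tau * nn + 4 / eps * deficit.
  by field; rewrite ?gt_eqF ?nn_gt0.
have lL := ln_light_bound_ge0 eps_gt0.
have hX := deficit_le; have hXc := cap_loss_ge0.
have : 2 * ln Lb * deficit <= 2 * ln Lb * (cap_loss + tau * nn).
  by rewrite ler_wpM2l ?mulr_ge0.
have e4 : 0 <= 4 / eps by rewrite divr_ge0 // ltW.
have : 4 / eps * deficit <= 4 / eps * (cap_loss + tau * nn) by rewrite ler_wpM2l.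
have : 0 <= 4 / eps * cap_loss by rewrite mulr_ge0.
have : nn * (tau * mix_slack eps) <= nn * (eps / 2) by rewrite ler_wpM2l ?ler0n ?mix_mul_slack.
rewrite /mix_slack; lra.
Qed.

Lemma entr_loss_le :
  \sum_a \sum_b adj a b * entr (m a b) - \sum_a \sum_b adj a b * entr (xnorm a b) <= eps * nn / 2.
Proof.
apply: le_trans err_budget; apply: le_trans sum_edge_err_le.
have -> : \sum_a \sum_b edge_err a b =
    \sum_a \sum_b (adj a b * ((m a b - xnorm a b) * (ln nn - 1)) + edge_err a b).
  by under [RHS]eq_bigr do rewrite big_split /=; rewrite big_split /= sum_tangent_terms add0r.
rewrite -sumrB; apply: ler_sum => a _; rewrite -sumrB; apply: ler_sum => b _.
by rewrite -mulrBr entr_sub_le_edge_err.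
Qed.

Lemma xnorm_pfm : perfect_fractional_matching G xnorm.
Proof.
split; [by move=> v w /xnorm_gt0/ltW | split].
- by move=> v; rewrite sum_outN; under eq_bigr do rewrite adj_xnorm; exact: row_xnorm.
- by move=> w; rewrite sum_inN; under eq_bigr do rewrite adj_xnorm; exact: col_xnorm.
Qed.

Lemma xnorm_b_normal b : Num.max (1 / tau) B <= b -> b_normal G b xnorm.
Proof.
rewrite ge_max => /andP[taub Bb] v w vw.
have b0 : 0 < b by apply: lt_le_trans taub; rewrite divr_gt0 ?mix_gt0.
split.
- apply: le_trans (xnorm_ge_mix vw); rewrite invfM mulrA ler_wpM2r ?invr_ge0 ?ler0n //.
  by rewrite ler_pdivrMr // mulrC -ler_pdivrMr ?mix_gt0.
- by rewrite ler_pdivlMr ?nn_gt0 // mulrC (le_trans (n_xnorm_le_heavy vw)).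
Qed.

Lemma xnorm_entropy_ge : entropy G m - eps * nn <= entropy G xnorm.
Proof.
rewrite !entropyE lerBlDr -lerBlDl -mulrBl ler_pdivrMr ?ln2_gt0 //.
apply: le_trans entr_loss_le _.
rewrite -[X in X <= _]mulr1 -mulrA ler_wpM2l ?mulr_ge0 ?ler0n ?(ltW eps_gt0) //.
by have := @ln2_ge_half R; lra.
Qed.

End Construction.

Theorem theorem4p4 :
  forall eps : R, 0 < eps -> eps <= 1 ->
  exists b0 : R, forall b : R, b0 <= b ->
  exists n0 : nat, forall n : nat, (n0 <= n)%N ->
  forall (G : digraph n) (m : weighting n),
    is_neps_digraph eps G ->
    perfect_fractional_matching G m ->
    entropy G m >= n%:R * log2 (n%:R / 2) + eps * n%:R ->
  exists x : weighting n,
    perfect_fractional_matching G x /\ b_normal G b x /\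
    entropy G x >= entropy G m - eps * n%:R.
Proof.
move=> eps eps0 eps1; exists (Num.max (1 / mix eps) (heavy_bound eps)) => b hb.
exists 1%N => n n1 G m hdeg hm hent.
exists (xnorm G m eps); split; first exact: xnorm_pfm.
split; first exact: xnorm_b_normal.
exact: xnorm_entropy_ge.
Qed.
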